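(* Let $n\ge2$ and $k\ge1$ be integers and $z_1,\dots,z_n$ indeterminates. Then \[ \sum_{\beta\in\mathrm{Pairs}(k,n)}\det(R_3(\beta))^2=n^{k-1}\sum_{b\in C(k+1,n)}D(z(b))^2 . \]
   Context: $\mathrm{Pairs}(k,n)$ is the set of multisets $\beta$ of $k$ pairs $\{\beta(v,1),\beta(v,2)\}$ with $1\le\beta(v,1)<\beta(v,2)\le n$. For $\beta$ listed in some order $\beta(1),\dots,\beta(k)$, $R_3(\beta)$ is the $k\times k$ matrix with entries $R_3(\beta)_{u,v}=z_{\beta(v,1)}^u-z_{\beta(v,2)}^u$ ($1\le u,v\le k$); $\det(R_3(\beta))^2$ is independent of the order. $C(k+1,n)$ is the set of $(k+1)$-element subsets $b=\{b_1<\dots<b_{k+1}\}$ of $\{1,\dots,n\}$ (empty if $k+1>n$), $z(b)=(z_{b_1},\dots,z_{b_{k+1}})$ and $D(x_1,\dots,x_m)=\prod_{1\le i<j\le m}(x_j-x_i)$. *)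

From HB Require Import structures.
From mathcomp Require Import all_boot all_order all_algebra.
From mathcomp Require Export mpoly.
Set Implicit Arguments.
Unset Strict Implicit.
Unset Printing Implicit Defensive.
Import Order.TTheory GRing.Theory Num.Theory.
Local Open Scope ring_scope.

(* Pairs {a, b} with a < b, indices in 'I_n (0-based: index i stands for z_(i+1)). *)
Definition pair_t (n : nat) := {p : 'I_n * 'I_n | (p.1 < p.2)%N}.

(* A multiset of k pairs is given by its multiplicity function m
   (total multiplicity k); multiplicities are <= k, so values in 'I_k.+1. *)
Definition is_pairs (k n : nat) (m : {ffun pair_t n -> 'I_k.+1}) : bool :=
  (\sum_(p : pair_t n) (m p : nat) == k)%N.

Definition listing (k n : nat) (m : {ffun pair_t n -> 'I_k.+1}) : seq (pair_t n) :=
  flatten [seq nseq (m p) p | p <- enum {: pair_t n}].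

(* R_3(beta)_{u,v} = z_{beta(v,1)}^u - z_{beta(v,2)}^u, 1 <= u,v <= k
   (row index i : 'I_k stands for u = i+1). *)
Definition R3 (R : comNzRingType) (n k : nat) (z : 'I_n -> R) (s : seq (pair_t n))
  : 'M[R]_k :=
  \matrix_(i < k, j < k)
    match onth s j with
    | Some p => z (val p).1 ^+ i.+1 - z (val p).2 ^+ i.+1
    | None => 0
    end.

(* D(z(b)) = prod_{i<j in b} (z_j - z_i), i.e. the Vandermonde product of
   z_{b_1}, ..., z_{b_m} for b listed increasingly. *)
Definition Dz (R : comNzRingType) (n : nat) (z : 'I_n -> R) (b : {set 'I_n}) : R :=
  \prod_(i in b) \prod_(j in b | (i < j)%N) (z j - z i).

From HB Require Import structures.
From mathcomp Require Import all_boot all_order all_algebra fingroup perm.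
From mathcomp Require Import mpoly.
From mathcomp.algebra_tactics Require Import ring.
Import Order.TTheory GRing.Theory Num.Theory.
Local Open Scope ring_scope.
Set Implicit Arguments.
Unset Strict Implicit.
Unset Printing Implicit Defensive.

(* Write p_r for the power sums of the z_a. By Lagrange's identity the Gram matrix of the
   rows of R_3 taken over all pairs is (n p_(i+j) - p_i p_j)_(1 <= i,j <= k), so by
   Cauchy-Binet its determinant is the sum of det(R_3(beta))^2 over the k-sets beta of pairs;
   multisets with a repeated pair contribute 0.  That Gram matrix is the Schur complement,
   scaled by n, of the pivot n = p_0 of the Hankel matrix (p_(i+j))_(0 <= i,j <= k), so
   n det(Gram) = n^k det(p_(i+j)); and Cauchy-Binet together with Vandermonde gives
   det(p_(i+j)) = sum_b D(z(b))^2. *)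

Section CauchyBinet.
Variables (R : comNzRingType) (T : finType) (x0 : T) (m : nat).

Definition enum_nth (S : {set T}) (j : 'I_m) : T := nth x0 (enum S) j.

Lemma mem_enum_nth (S : {set T}) (j : 'I_m) : #|S| = m -> enum_nth S j \in S.
Proof. by move=> cS; rewrite /enum_nth -mem_enum mem_nth // -cardE cS. Qed.

Lemma index_enum_nth (S : {set T}) (j : 'I_m) : #|S| = m -> index (enum_nth S j) (enum S) = j.
Proof. by move=> cS; rewrite index_uniq ?enum_uniq // -cardE cS. Qed.

Lemma enum_nth_inj (S : {set T}) : #|S| = m -> injective (enum_nth S).
Proof.
by move=> cS i j eij; apply: val_inj; rewrite /= -(index_enum_nth i cS) eij index_enum_nth.
Qed.

Lemma det_mul_sum_ffun (A : 'I_m -> T -> R) (B : T -> 'I_m -> R) :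
  \det (\matrix_(i, j) \sum_t A i t * B t j) =
  \sum_(f : {ffun 'I_m -> T}) (\prod_i A i (f i)) * \det (\matrix_(i, j) B (f i) j).
Proof.
rewrite /(\det _).
transitivity (\sum_(s : 'S_m) \sum_(f : {ffun 'I_m -> T})
   (-1) ^+ s * ((\prod_i A i (f i)) * \prod_i B (f i) (s i))).
  apply: eq_bigr => s _; rewrite -big_distrr /=; congr (_ * _).
  under eq_bigr do rewrite mxE.
  by rewrite bigA_distr_bigA; apply: eq_bigr => f _; rewrite big_split.
rewrite exchange_big; apply: eq_bigr => f _ /=.
rewrite big_distrr; apply: eq_bigr => s _ /=.
by rewrite mulrCA; congr (_ * (_ * _)); apply: eq_bigr => i _; rewrite mxE.
Qed.

Lemma sum_injective_onto (S : {set T}) (F : {ffun 'I_m -> T} -> R) : #|S| = m ->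
  \sum_(f : {ffun 'I_m -> T} | injectiveb f && ([set f i | i : 'I_m] == S)) F f
  = \sum_(s : 'S_m) F [ffun i => enum_nth S (s i)].
Proof.
move=> cS.
pose pos (f : {ffun 'I_m -> T}) : {ffun 'I_m -> 'I_m} :=
  [ffun i => insubd i (index (f i) (enum S))].
have enum_nth_pos (f : {ffun 'I_m -> T}) i : f i \in S -> enum_nth S (pos f i) = f i.
  move=> fiS; rewrite ffunE /enum_nth val_insubd.
  have -> : (index (f i) (enum S) < m)%N by rewrite -[X in (_ < X)%N]cS cardE index_mem mem_enum.
  by rewrite nth_index ?mem_enum.
have pos_enum_nth (s : 'S_m) : pos [ffun i => enum_nth S (s i)] = pval s.
  apply/ffunP => i; apply: val_inj.
  by rewrite !ffunE val_insubd index_enum_nth // ltn_ord pvalE.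
rewrite (reindex_onto (fun s : 'S_m => [ffun i => enum_nth S (s i)])
                      (fun f => insubd (1%g : 'S_m) (pos f))) /=.
  apply: eq_bigl => s.
  have inj_s : injective [ffun i => enum_nth S (s i)].
    by move=> i j; rewrite !ffunE => /(enum_nth_inj cS) /perm_inj.
  have -> : [set [ffun i => enum_nth S (s i)] i | i : 'I_m] == S.
    rewrite eqEcard card_imset // card_ord cS leqnn andbT.
    by apply/subsetP => x /imsetP [i _ ->]; rewrite ffunE mem_enum_nth.
  rewrite (introT (injectiveP _) inj_s) /=; apply/eqP/val_inj.
  by rewrite pos_enum_nth valKd.
move=> f /andP [/injectiveP inj_f /eqP im_f].
have fS i : f i \in S by rewrite -im_f imset_f.
have inj_pos : injective (pos f).
  by move=> i j /(congr1 (enum_nth S)); rewrite !enum_nth_pos // => /inj_f.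
have val_inv : val (insubd (1%g : 'S_m) (pos f)) = pos f.
  by rewrite insubdK //; apply/injectiveP.
apply/ffunP => i; rewrite ffunE -[RHS]enum_nth_pos //.
by congr (enum_nth S _); rewrite -[in RHS]val_inv pvalE.
Qed.

Lemma cauchy_binet (A : 'I_m -> T -> R) (B : T -> 'I_m -> R) :
  \det (\matrix_(i, j) \sum_t A i t * B t j) =
  \sum_(S : {set T} | #|S| == m)
     \det (\matrix_(i, j) A i (enum_nth S j)) * \det (\matrix_(i, j) B (enum_nth S i) j).
Proof.
rewrite det_mul_sum_ffun (bigID (fun f : {ffun 'I_m -> T} => injectiveb f)) /=.
rewrite [X in _ + X]big1 ?addr0; last first.
  move=> f /injectivePn [i1 [i2 Di12 Ef12]].
  by rewrite (determinant_alternate Di12) ?mulr0 // => j; rewrite !mxE Ef12.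
rewrite (partition_big (fun f : {ffun 'I_m -> T} => [set f i | i : 'I_m])
                       (fun S => #|S| == m)) /=; last first.
  by move=> f /injectiveP inj_f; rewrite card_imset // card_ord.
apply: eq_bigr => S /eqP cS; rewrite sum_injective_onto //.
set Y := \matrix_(i, j) B (enum_nth S i) j.
rewrite [\det (\matrix_(i, j) A i _)]/(\det _) big_distrl /=; apply: eq_bigr => s _.
have -> : \matrix_(i, j) B ([ffun i => enum_nth S (s i)] i) j = row_perm s Y.
  by apply/matrixP => i j; rewrite !mxE ffunE.
rewrite row_permE det_mulmx det_perm mulrCA mulrA; congr (_ * _ * _).
by apply: eq_bigr => i _; rewrite !mxE ffunE.
Qed.

End CauchyBinet.

Lemma sorted_enum_ord_set n (b : {set 'I_n}) : sorted <%O (enum b).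
Proof.
have -> : enum b = [seq x <- enum 'I_n | x \in b] by rewrite enumT.
apply: lt_sorted_filter.
by have := iota_ltn_sorted 0 n; rewrite -val_enum_ord sorted_map.
Qed.

Lemma enum_nth_ltn n m (u0 : 'I_n) (b : {set 'I_n}) (i j : 'I_m) : #|b| = m ->
  (enum_nth u0 b i < enum_nth u0 b j)%N = (i < j)%N.
Proof.
move=> cb; have szb : size (enum b) = m by rewrite -cardE.
by apply: (lt_sorted_ltn_nth u0 (sorted_enum_ord_set b)); rewrite inE szb.
Qed.

Lemma Dz_enum_nth (R : comNzRingType) n m (z : 'I_n -> R) (u0 : 'I_n) (b : {set 'I_n}) :
  #|b| = m ->
  Dz z b = \prod_(i < m) \prod_(j < m | (i < j)%N) (z (enum_nth u0 b j) - z (enum_nth u0 b i)).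
Proof.
move=> cb; have szb : size (enum b) = m by rewrite -cardE.
rewrite /Dz -big_enum (big_nth u0) szb big_mkord; apply: eq_bigr => i _.
rewrite big_mkcondr -big_enum (big_nth u0) szb big_mkord [RHS]big_mkcond.
by apply: eq_bigr => j _; rewrite -(enum_nth_ltn u0 i j cb).
Qed.

Lemma det_schur_pivot (R : comNzRingType) k (c : R) (u : 'rV_k) (v : 'cV_k) (D : 'M_k) :
  c ^+ k * \det (block_mx c%:M u v D) = c * \det (c *: D - v *m u).
Proof.
(* Left-multiply by the block-triangular [1 0; -v c], of determinant c^k. *)
pose L := block_mx (1%:M : 'M[R]_1) 0 (- v) c%:M.
have -> : c ^+ k = \det L by rewrite det_lblock det1 det_scalar mul1r.
rewrite -det_mulmx mulmx_block !mul1mx !mul0mx !addr0 mulNmx mul_mx_scalar mul_scalar_mx.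
by rewrite addNr det_ublock det_scalar1 mul_scalar_mx mulNmx addrC.
Qed.

Section PowerSums.
Variables (R : comNzRingType) (n : nat) (z : 'I_n -> R).

Definition power_sum (r : nat) : R := \sum_a z a ^+ r.

Definition hankel_power_sums m : 'M[R]_m := \matrix_(i, j) power_sum (i + j).

Definition gram_power_sums k : 'M[R]_k :=
  \matrix_(i, j) (n%:R * power_sum (i.+1 + j.+1) - power_sum i.+1 * power_sum j.+1).

Lemma power_sumD r s : power_sum (r + s) = \sum_a z a ^+ r * z a ^+ s.
Proof. by apply: eq_bigr => a _; rewrite exprD. Qed.

Lemma det_hankel_power_sums (u0 : 'I_n) m :
  \det (hankel_power_sums m) = \sum_(b : {set 'I_n} | #|b| == m) Dz z b ^+ 2.
Proof.
have -> : hankel_power_sums m = \matrix_(i, j) \sum_a z a ^+ i * z a ^+ j.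
  by apply/matrixP => i j; rewrite !mxE power_sumD.
rewrite (cauchy_binet u0); apply: eq_bigr => b /eqP cb.
pose V := \matrix_(i < m, j < m) z (enum_nth u0 b j) ^+ i.
have detV : \det V = Dz z b.
  have -> : V = Vandermonde m (\row_j z (enum_nth u0 b j)).
    by apply/matrixP => i j; rewrite !mxE.
  rewrite det_Vandermonde (Dz_enum_nth z u0 cb).
  by apply: eq_bigr => i _; apply: eq_bigr => j _; rewrite !mxE.
have -> : \matrix_(i, j) z (enum_nth u0 b i) ^+ j = V^T.
  by apply/matrixP => i j; rewrite !mxE.
by rewrite det_tr detV expr2.
Qed.

Lemma det_hankel_power_sums_schur k :
  n%:R ^+ k * \det (hankel_power_sums k.+1) = n%:R * \det (gram_power_sums k).
Proof.
have p0 : power_sum 0 = n%:R.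
  by rewrite /power_sum (eq_bigr (fun=> 1)) ?sumr_const ?card_ord // => a _; rewrite expr0.
have -> : hankel_power_sums k.+1
          = block_mx (n%:R)%:M (\row_j power_sum j.+1) (\col_i power_sum i.+1)
                     (\matrix_(i, j) power_sum (i.+1 + j.+1)).
  rewrite -[LHS](@submxK _ 1 k 1 k).
  by f_equal; apply/matrixP => i j; rewrite !mxE ?ord1 /= ?addn0 ?p0.
rewrite det_schur_pivot; congr (_ * \det _).
by apply/matrixP => i j; rewrite !mxE big_ord1 !mxE.
Qed.

End PowerSums.

Section Lagrange.
Variables (R : comNzRingType) (n : nat).

Lemma sum_pair_t (F : 'I_n -> 'I_n -> R) :
  \sum_(p : pair_t n) F (val p).1 (val p).2
  = \sum_(q : 'I_n * 'I_n | (q.1 < q.2)%N) F q.1 q.2.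
Proof.
rewrite [RHS](reindex_omap (val : pair_t n -> _) insub) /=; last first.
  by move=> q lt; rewrite insubT.
by apply: eq_bigl => -[q lt] /=; rewrite insubT [in RHS]lt /= eqxx.
Qed.

Lemma sum_sym_pairs (F : 'I_n -> 'I_n -> R) :
  (forall a b, F a b = F b a) -> (forall a, F a a = 0) ->
  \sum_(q : 'I_n * 'I_n) F q.1 q.2
  = 2%:R * \sum_(q : 'I_n * 'I_n | (q.1 < q.2)%N) F q.1 q.2.
Proof.
move=> Fsym Fdiag.
rewrite (bigID (fun q : 'I_n * 'I_n => (q.1 < q.2)%N)) /=.
rewrite [X in _ + X](bigID (fun q : 'I_n * 'I_n => (q.2 < q.1)%N)) /=.
rewrite [X in _ + (_ + X)]big1 ?addr0; last first.
  move=> [a b] /= /andP [ab ba].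
  by have -> : a = b by apply/val_inj/eqP; rewrite eqn_leq leqNgt ba leqNgt ab.
have swap_inj : injective (fun q : 'I_n * 'I_n => (q.2, q.1)) by move=> [a b] [c d] [-> ->].
rewrite [X in _ + X](reindex_inj swap_inj) /=.
rewrite [X in _ + X](eq_big (fun q : 'I_n * 'I_n => (q.1 < q.2)%N) (fun q => F q.1 q.2)).
- by rewrite mulr_natl mulr2n.
- by move=> [a b] /=; case: ltngtP.
- by move=> [a b] _ /=.
Qed.

Lemma sum_ordered_pairs_lagrange (x y : 'I_n -> R) :
  \sum_(q : 'I_n * 'I_n) (x q.1 - x q.2) * (y q.1 - y q.2)
  = 2%:R * (n%:R * \sum_a x a * y a - (\sum_a x a) * (\sum_a y a)).
Proof.
rewrite -(pair_bigA _ (fun a b => (x a - x b) * (y a - y b))) /=.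
have inner a : \sum_b (x a - x b) * (y a - y b)
    = x a * y a *+ n + \sum_b x b * y b - x a * \sum_b y b - y a * \sum_b x b.
  rewrite (eq_bigr (fun b => x a * y a + x b * y b - (x a * y b + y a * x b))); last first.
    by move=> b _; ring.
  by rewrite sumrB !big_split /= sumr_const card_ord !big_distrr /=; ring.
rewrite (eq_bigr _ (fun a _ => inner a)) !sumrB big_split /= sumr_const card_ord.
rewrite -!big_distrl /=; under eq_bigr do rewrite -mulr_natl.
by rewrite -big_distrr /=; ring.
Qed.

(* The identity holds in every commutative ring; the regularity of 2 is only used to
   halve the sum over ordered pairs. *)
Lemma lagrange_identity (x y : 'I_n -> R) : GRing.lreg (2%:R : R) ->
  \sum_(p : pair_t n) (x (val p).1 - x (val p).2) * (y (val p).1 - y (val p).2)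
  = n%:R * \sum_a x a * y a - (\sum_a x a) * (\sum_a y a).
Proof.
move=> reg2; apply: reg2.
rewrite -sum_ordered_pairs_lagrange (sum_pair_t (fun a b => (x a - x b) * (y a - y b))).
rewrite (sum_sym_pairs (F := fun a b => (x a - x b) * (y a - y b))) // => [a b|a].
- by ring.
- by rewrite subrr mul0r.
Qed.

End Lagrange.

Lemma onth_nthE (T : Type) (x0 : T) (s : seq T) j :
  (j < size s)%N -> onth s j = Some (nth x0 s j).
Proof. by move=> lt_j; rewrite onthE (nth_map x0). Qed.

Section MultisetsOfPairs.
Variables (n k : nat).
Implicit Types (m : {ffun pair_t n -> 'I_k.+1}) (S : {set pair_t n}).

Lemma count_listing m p : count_mem p (listing m) = m p.
Proof.
rewrite /listing count_flatten -map_comp sumnE big_map big_enum /=.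
rewrite (bigD1 p) //= count_nseq /= eqxx mul1n big1 ?addn0 //.
by move=> q qp; rewrite count_nseq /= (negPf qp).
Qed.

Lemma size_listing m : size (listing m) = (\sum_p m p)%N.
Proof.
rewrite /listing size_flatten /shape -map_comp sumnE big_map big_enum /=.
by apply: eq_bigr => p _; rewrite /= size_nseq.
Qed.

Hypothesis k_gt0 : (0 < k)%N.

Definition mset_of_set S : {ffun pair_t n -> 'I_k.+1} := [ffun p => inord (p \in S)].

Lemma mset_of_setE S p : mset_of_set S p = (p \in S) :> nat.
Proof. by rewrite ffunE inordK // ltnS (leq_trans (leq_b1 _) k_gt0). Qed.

Lemma listing_mset_of_set S : listing (mset_of_set S) = enum S.
Proof.
have flatten_filter s :
    flatten [seq nseq (mset_of_set S q) q | q <- s] = [seq q <- s | q \in S].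
  by elim: s => //= q s ->; rewrite mset_of_setE; case: (q \in S).
by rewrite /listing flatten_filter enumT.
Qed.

Lemma sum_multisets_uniq (R : comNzRingType) (F : seq (pair_t n) -> R) :
  (forall s, size s = k -> ~~ uniq s -> F s = 0) ->
  \sum_(m : {ffun pair_t n -> 'I_k.+1} | is_pairs m) F (listing m)
  = \sum_(S : {set pair_t n} | #|S| == k) F (enum S).
Proof.
move=> F_not_uniq.
rewrite (bigID (fun m => uniq (listing m))) /= [X in _ + X]big1 ?addr0; last first.
  by move=> m /andP [/eqP sz_m]; apply: F_not_uniq; rewrite size_listing.
rewrite (reindex_onto mset_of_set (fun m => [set p | m p != ord0])) /=; last first.
  move=> m /andP [_ uniq_m]; apply/ffunP => p; apply: ord_inj.
  have : (m p <= 1)%N by rewrite -count_listing count_uniq_mem ?leq_b1.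
  by rewrite mset_of_setE inE; case: (m p) => [[|[|v]] lt] //=.
apply: eq_big => [S|S _]; last by rewrite listing_mset_of_set.
rewrite listing_mset_of_set enum_uniq andbT.
have -> : [set p | mset_of_set S p != ord0] == S.
  by apply/eqP/setP => p; rewrite inE -(inj_eq val_inj) /= mset_of_setE; case: (p \in S).
rewrite andbT /is_pairs (eq_bigr _ (fun p _ => mset_of_setE S p)).
by rewrite -sum1_card [in RHS]big_mkcond.
Qed.

End MultisetsOfPairs.

Section R3.
Variables (R : comNzRingType) (n k : nat) (z : 'I_n -> R).

Definition R3_entry (i : nat) (p : pair_t n) : R :=
  z (val p).1 ^+ i.+1 - z (val p).2 ^+ i.+1.

Lemma det_R3_not_uniq (s : seq (pair_t n)) :
  size s = k -> ~~ uniq s -> \det (R3 k z s) = 0.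
Proof.
case: s => [//|p0 s'] sz_s /(uniqPn p0) [i [j [lt_ij lt_j eq_ij]]].
rewrite sz_s in lt_j; have lt_i := ltn_trans lt_ij lt_j.
rewrite -det_tr (@determinant_alternate _ _ _ (Ordinal lt_i) (Ordinal lt_j)) //.
  by apply/eqP => /(congr1 val) /= eq_ij'; rewrite eq_ij' ltnn in lt_ij.
by move=> c; rewrite !mxE /= !(onth_nthE p0) ?sz_s // eq_ij.
Qed.

Lemma R3_enum (p0 : pair_t n) (S : {set pair_t n}) : #|S| = k ->
  R3 k z (enum S) = \matrix_(i, j) R3_entry i (enum_nth p0 S j).
Proof.
by move=> cS; apply/matrixP => i j; rewrite !mxE (onth_nthE p0) // -cardE cS.
Qed.

Lemma sum_det_R3_sq_sets (p0 : pair_t n) : GRing.lreg (2%:R : R) ->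
  \sum_(S : {set pair_t n} | #|S| == k) \det (R3 k z (enum S)) ^+ 2
  = \det (gram_power_sums z k).
Proof.
move=> reg2.
have -> : gram_power_sums z k = \matrix_(i, j) \sum_p R3_entry i p * R3_entry j p.
  apply/matrixP => i j; rewrite !mxE power_sumD.
  by rewrite (lagrange_identity (fun a => z a ^+ i.+1) (fun a => z a ^+ j.+1) reg2).
rewrite (cauchy_binet p0); apply: eq_bigr => S /eqP cS.
rewrite (R3_enum p0 cS) expr2 -[X in _ * X]det_tr; congr (_ * \det _).
by apply/matrixP => i j; rewrite !mxE.
Qed.

End R3.

Theorem theorem5p1 (n k : nat) (hn : (2 <= n)%N) (hk : (1 <= k)%N) :
  \sum_(m : {ffun pair_t n -> 'I_k.+1} | is_pairs m)
      (\det (R3 k (fun i : 'I_n => 'X_i : {mpoly int[n]}) (listing m))) ^+ 2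
  = (n%:R : {mpoly int[n]}) ^+ (k - 1)
    * \sum_(b : {set 'I_n} | #|b| == k.+1)
        (Dz (fun i : 'I_n => 'X_i : {mpoly int[n]}) b) ^+ 2.
Proof.
set z := fun i : 'I_n => 'X_i : {mpoly int[n]}.
have n_gt0 : (0 < n)%N by apply: leq_trans hn.
pose u0 : 'I_n := Ordinal n_gt0.
pose p0 : pair_t n := exist _ (Ordinal n_gt0, Ordinal hn) isT.
have natr_lreg c : (0 < c)%N -> GRing.lreg (c%:R : {mpoly int[n]}).
  by move=> c_gt0; apply/mulfI; rewrite -mpolyC_nat mpolyC_eq0 pnatr_eq0 -lt0n.
rewrite (sum_multisets_uniq hk (F := fun s => \det (R3 k z s) ^+ 2)); last first.
  by move=> s sz_s not_uniq; rewrite det_R3_not_uniq // expr0n.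
rewrite (sum_det_R3_sq_sets k z p0 (natr_lreg 2 isT)).
apply: (natr_lreg n n_gt0).
rewrite mulrA -exprS subn1 prednK // -(det_hankel_power_sums z u0 k.+1).
by rewrite det_hankel_power_sums_schur.
Qed.
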